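(* Let $L$ be a positive integer and let $a,b,s$ be integers with $a\mid L$, $b\mid L$, $0\le s<b$, $s\in\frac{ab}{\gcd(ab,L)}\mathbb{Z}$, and let $\Lambda=\begin{pmatrix} a&0\\ s&b\end{pmatrix}\mathbb{Z}_L^2$. Let $\lambda_2=b/\gcd(b,s)$ and let $\tilde\Lambda$ be the subgroup of $\mathbb{Z}_L^2$ generated by $(\lambda_2a,0)^T$ and $(0,b)^T$. Then $$\Lambda=\bigcup_{m=0}^{\lambda_2-1}\Big((am,\ sm \bmod b)^T+\tilde\Lambda\Big).$$
   Context: $\mathbb{Z}_L=\mathbb{Z}/L\mathbb{Z}$; for an integer matrix $A$, $A\mathbb{Z}_L^2=\{Az\bmod L: z\in\mathbb{Z}_L^2\}$. $\gcd(b,0)=b$. *)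

From mathcomp Require Import all_boot all_order all_algebra.
Set Implicit Arguments. Unset Strict Implicit. Unset Printing Implicit Defensive.
Import Order.TTheory GRing.Theory Num.Theory.
Local Open Scope ring_scope.

(* Elements of Z_L^2 are represented by pairs of integers reduced mod L
   (canonical representatives in [0, L)). *)

Definition Lambda (L a s b : int) (p : int * int) : Prop :=
  exists z1 z2 : int, p = ((a * z1) %% L, (s * z1 + b * z2) %% L)%Z.

Definition gen_subgroup (L : int) (u v : int * int) (p : int * int) : Prop :=
  exists k l : int,
    p = ((k * u.1 + l * v.1) %% L, (k * u.2 + l * v.2) %% L)%Z.

Definition coset (L : int) (w : int * int) (H : int * int -> Prop)
  (p : int * int) : Prop :=
  exists h, H h /\ p = ((w.1 + h.1) %% L, (w.2 + h.2) %% L)%Z.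

From mathcomp Require Import all_boot all_order all_algebra.
From mathcomp Require Import ring.
Import Order.TTheory GRing.Theory Num.Theory.
Local Open Scope ring_scope.

(* The only arithmetic input is that [lam2 = b / gcd(b, s)] is positive and
   that [b] divides [s * lam2].  Writing [z1 = q lam2 + m] with [0 <= m < lam2],
   the point [(a z1, s z1 + b z2)] is then [(a m, s m mod b)] plus
   [q (lam2 a, 0)] plus a multiple of [(0, b)]; conversely every such sum has
   this form. *)

Lemma dvdz_mul_divz_gcdl (b s : int) : (b %| s * divz b (gcdz b s))%Z.
Proof.
have [k sE] := dvdzP (dvdz_gcdr b s).
have [g0|g0] := eqVneq (gcdz b s) 0; first by rewrite g0 divz0 mulr0.
by rewrite {1}sE -mulrA [gcdz b s * _]mulrC divzK ?dvdz_gcdl // dvdz_mull.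
Qed.

Lemma divz_gcd_gt0 (b s : int) : 0 < b -> 0 < divz b (gcdz b s).
Proof.
move=> b0; have g0 : 0 < gcdz b s by rewrite lt_def gcdz_eq0 (gt_eqF b0).
by rewrite -(pmulr_lgt0 _ g0) divzK // dvdz_gcdl.
Qed.

Section CosetDecomposition.

Variables (L a s b lam t : int).
Hypotheses (lam_gt0 : 0 < lam) (s_lam : s * lam = b * t).

Let H := gen_subgroup L (lam * a, 0) (0, b).

Lemma Lambda_in_coset (z1 z2 : int) :
  let m := (z1 %% lam)%Z in
  coset L (a * m, (s * m) %% b)%Z H ((a * z1) %% L, (s * z1 + b * z2) %% L)%Z.
Proof.
move=> m; set q := (z1 %/ lam)%Z.
set u := ((s * m) %/ b)%Z; set r := ((s * m) %% b)%Z.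
have ez : z1 = q * lam + m := divz_eq z1 lam.
have es : s * m = u * b + r := divz_eq (s * m) b.
exists (((q * (lam * a)) %% L)%Z, (((q * t + z2 + u) * b) %% L)%Z); split.
  by exists q, (q * t + z2 + u); rewrite !mulr0 addr0 add0r.
rewrite /= !modzDmr; congr (_ %% L, _ %% L)%Z; first by rewrite ez; ring.
have -> : s * z1 = s * m + b * t * q by rewrite ez -s_lam; ring.
rewrite es; ring.
Qed.

Lemma coset_in_Lambda (m : int) p :
  coset L (a * m, (s * m) %% b)%Z H p -> Lambda L a s b p.
Proof.
move=> [_ [[k [l ->]] ->]].
set u := ((s * m) %/ b)%Z; set r := ((s * m) %% b)%Z.
have es : s * m = u * b + r := divz_eq (s * m) b.
have -> : r = s * m - u * b by rewrite es; ring.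
exists (m + k * lam), (l - k * t - u).
rewrite /= !modzDmr; congr (_ %% L, _ %% L)%Z; first by ring.
have -> : s * (m + k * lam) = s * m + b * t * k by rewrite -s_lam; ring.
ring.
Qed.

Lemma Lambda_cosetsE p :
  Lambda L a s b p <-> exists m, 0 <= m < lam /\ coset L (a * m, (s * m) %% b)%Z H p.
Proof.
split; last by move=> [m [_ /coset_in_Lambda]].
move=> [z1 [z2 ->]]; exists (z1 %% lam)%Z; split; last exact: Lambda_in_coset.
by rewrite modz_ge0 ?gt_eqF //= -[X in _ < X]gtr0_norm // ltz_mod ?gt_eqF.
Qed.

End CosetDecomposition.

Theorem proposition3p1 (L a b s : int) :
  0 < L -> (a %| L)%Z -> (b %| L)%Z -> 0 <= s < b ->
  (divz (a * b) (gcdz (a * b) L) %| s)%Z ->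
  let lam2 := divz b (gcdz b s) in
  forall p : int * int,
    Lambda L a s b p <->
    exists m : int, 0 <= m < lam2 /\
      coset L (a * m, (s * m) %% b)%Z (gen_subgroup L (lam2 * a, 0) (0, b)) p.
Proof.
move=> _ _ _ /andP[s_ge0 s_lt_b] _ lam2 p.
have /dvdzP[t s_lam] := dvdz_mul_divz_gcdl b s.
apply: (@Lambda_cosetsE _ _ _ _ _ t).
  exact/divz_gcd_gt0/(le_lt_trans s_ge0 s_lt_b).
by rewrite s_lam mulrC.
Qed.
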